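(* Let $K$ be a number field, let $\alpha,\beta$ be multiplicatively independent positive rational numbers, and let $F\in K[[x^{\mathbb{R}}]]$ be a Hahn series satisfying nontrivial homogeneous equations $\sum_{i=0}^{d_1}P_i(x)F(x^{\alpha^i})=0$ and $\sum_{i=0}^{d_2}Q_i(x)F(x^{\beta^i})=0$ with $P_i,Q_i\in K[x]$, $P_{d_1}\ne0$, $Q_{d_2}\ne0$. Fix an integer $N>0$. Then there is a positive integer $l$ such that for all integers $m,n$ with $|m|<N$ and $|n|<N$, the Hahn series $F(x^l)$ is $\alpha^n\beta^m$-Mahler, i.e. there exist $e\ge0$ and $R_0,\dots,R_e\in K[x]$ not all zero with $\sum_{j=0}^e R_j(x)F\big(x^{l(\alpha^n\beta^m)^j}\big)=0$.
   Context: $K[[x^{\mathbb{R}}]]$ is the field of Hahn series $\sum_{i\in\mathbb{R}} f_ix^i$ ($f_i\in K$) with well-ordered support; $F(x^\gamma)=\sum_if_ix^{\gamma i}$ for $\gamma>0$. Positive reals $\alpha,\beta$ are multiplicatively independent if $\log\alpha/\log\beta\notin\mathbb{Q}$. *)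

From HB Require Import structures.
From mathcomp Require Import all_boot all_order all_algebra all_field.
From mathcomp Require Import all_classical all_reals all_analysis.
From mathcomp Require Import Rstruct.
Set Implicit Arguments. Unset Strict Implicit. Unset Printing Implicit Defensive.
Import Order.TTheory GRing.Theory Num.Theory.
Local Open Scope classical_set_scope.
Local Open Scope ring_scope.

Notation RR := Rdefinitions.R.

Definition well_ordered_set (S : set RR) : Prop :=
  forall A : set RR, A `<=` S -> A !=set0 ->
    exists a, A a /\ forall b, A b -> a <= b.

(* A Hahn series sum_i f_i x^i in K[[x^R]] is represented by its coefficient
   function f : R -> K; it is a Hahn series iff its support is well ordered. *)
Definition is_hahn (K : fieldType) (f : RR -> K) : Prop :=
  well_ordered_set [set i | f i != 0].

(* F(x^g) = sum_i f_i x^(g i): coefficient at j is f (j / g), for g > 0. *)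
Definition hsubst (K : fieldType) (g : RR) (f : RR -> K) : RR -> K :=
  fun j => f (j / g).

(* P(x) * F for a polynomial P = sum_k p_k x^k: coefficient at j is
   sum_k p_k f (j - k). *)
Definition hpolymul (K : fieldType) (P : {poly K}) (f : RR -> K) : RR -> K :=
  fun j => \sum_(k < size P) P`_k * f (j - k%:R).

Definition mahler_rel (K : fieldType) (g : RR) (e : nat) (Rs : nat -> {poly K})
  (f : RR -> K) : Prop :=
  forall t : RR, \sum_(j < e.+1) hpolymul (Rs j) (hsubst (g ^+ j) f) t = 0.

Definition is_mahler (K : fieldType) (g : RR) (f : RR -> K) : Prop :=
  exists (e : nat) (Rs : nat -> {poly K}),
    (exists j, (j <= e)%N /\ Rs j != 0) /\ mahler_rel g e Rs f.

Definition mult_indep (a b : RR) : Prop :=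
  ~ exists q : rat, ln a / ln b = ratr q.

(* Let l be a common denominator of the finitely many rationals α^s β^t that
   occur, and h = 1/l.  Substituting x ↦ x^(α^s β^t) in the α-equation gives a
   linear relation over K[x^h] between the terms F(x^(α^(s+k) β^t)), k ≤ d1; its
   leading and its lowest nonzero coefficient let one solve for the top and for
   the bottom term.  Hence every F(x^(α^s β^t)) lies in the K(x^h)-span of the
   d1 terms with 0 ≤ s < d1, and, using the β-equation in the same way, in the
   span of the d1 d2 terms with 0 ≤ s < d1, 0 ≤ t < d2.  So for γ = α^n β^m the
   d1 d2 + 1 series F(x^(γ^j)), j ≤ d1 d2, are linearly dependent over K[x^h],
   and x ↦ x^l turns the dependence into a γ-Mahler equation for F(x^l). *)

From HB Require Import structures.
From mathcomp Require Import all_boot all_order all_algebra all_field.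
From mathcomp Require Import all_classical all_reals all_analysis.
From mathcomp Require Import Rstruct.
From mathcomp Require Import ring zify.
Import Order.TTheory GRing.Theory Num.Theory.
Local Open Scope ring_scope.

Set Implicit Arguments. Unset Strict Implicit. Unset Printing Implicit Defensive.

Lemma idomain_rows_dependent (R : idomainType) (r : nat) :
  forall m (C : 'I_m -> 'I_r -> R), (r < m)%N ->
  exists2 mu : 'I_m -> R, (exists j, mu j != 0) &
    forall k, \sum_j mu j * C j k = 0.
Proof.
elim: r => [|r IH] m C ltrm.
  by exists (fun=> 1); [exists (Ordinal ltrm); exact: oner_neq0 | case].
case: (boolP [forall j, C j ord_max == 0]) => [/forallP Clast0|].
  have [mu mu_nz ker] := IH m (fun j k => C j (lift ord_max k)) (ltnW ltrm).
  exists mu => // k; case: (unliftP ord_max k) => [k' ->|->]; first exact: ker.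
  by rewrite big1 // => j _; rewrite (eqP (Clast0 j)) mulr0.
case: m C ltrm => // m C ltrm /forallPn[j0 /= piv_nz].
pose piv := C j0 ord_max.
pose Cl j k := C (lift j0 j) k.
(* Gaussian elimination of the last column, pivoting on row [j0]. *)
have [nu [j1 nu_nz] ker] := IH m
  (fun j k => piv * Cl j (lift ord_max k) - Cl j ord_max * C j0 (lift ord_max k)) ltrm.
pose mu i := if unlift j0 i is Some j then nu j * piv
             else - \sum_j nu j * Cl j ord_max.
have mu_lift j : mu (lift j0 j) = nu j * piv by rewrite /mu liftK.
exists mu; first by exists (lift j0 j1); rewrite mu_lift mulf_neq0.
move=> k; rewrite (bigD1_ord j0) //= {1}/mu unlift_none.
under eq_bigr => j _ do rewrite mu_lift.
rewrite mulNr mulr_suml -sumrN -big_split /=.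
transitivity (\sum_(j < m) nu j * (piv * Cl j k - Cl j ord_max * C j0 k)).
  by apply: eq_bigr => j _; rewrite /Cl; ring.
case: (unliftP ord_max k) => [k' ->|->]; first exact: ker.
by rewrite big1 // => j _; rewrite /piv [_ * C j0 _]mulrC subrr mulr0.
Qed.

Section HahnPolyAction.
Variable K : fieldType.
Implicit Types (p q : {poly K}) (f g : RR -> K) (h c : RR).

(* [hmul h p f] is p(x^h) F, where the Hahn series F has coefficient function f. *)
Definition hmul h p f : RR -> K :=
  fun t => \sum_(k < size p) p`_k * f (t - k%:R * h).

Lemma hmul_widen n h p f t : (size p <= n)%N ->
  hmul h p f t = \sum_(k < n) p`_k * f (t - k%:R * h).
Proof.
move=> le_p_n; rewrite /hmul (big_ord_widen n (fun k => p`_k * f (t - k%:R * h)) le_p_n).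
rewrite big_mkcond /=; apply: eq_bigr => k _.
by case: ltnP => // /(nth_default 0) ->; rewrite mul0r.
Qed.

Lemma hmul0p h f : hmul h 0 f = 0.
Proof. by apply: boolp.funext => t; rewrite /hmul size_poly0 big_ord0. Qed.

Lemma hmulDp h p q f : hmul h (p + q) f = hmul h p f + hmul h q f.
Proof.
apply: boolp.funext => t; transitivity (hmul h p f t + hmul h q f t) => //.
set n := maxn (size p) (size q).
rewrite !(@hmul_widen n) ?leq_maxl ?leq_maxr ?(leq_trans (size_polyD _ _)) //.
by rewrite -big_split /=; apply: eq_bigr => k _; rewrite coefD mulrDl.
Qed.

Lemma hmulCp h (a : K) f : hmul h a%:P f = (fun t => a * f t).
Proof.
apply: boolp.funext => t; rewrite (@hmul_widen 1) ?size_polyC ?leq_b1 //.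
by rewrite big_ord1 coefC /= mul0r subr0.
Qed.

Lemma hmul1p h f : hmul h 1 f = f.
Proof. by rewrite hmulCp; apply: boolp.funext => t; rewrite mul1r. Qed.

Lemma hmulZp h (a : K) p f : hmul h (a *: p) f = (fun t => a * hmul h p f t).
Proof.
apply: boolp.funext => t; rewrite (@hmul_widen (size p)) ?size_scale_leq //.
by rewrite /hmul mulr_sumr; apply: eq_bigr => k _; rewrite coefZ mulrA.
Qed.

Lemma hmulXp h p f : hmul h ('X * p) f = (fun t => hmul h p f (t - h)).
Proof.
apply: boolp.funext => t; rewrite (@hmul_widen (size p).+1); last first.
  by rewrite (leq_trans (size_polyMleq _ _)) // size_polyX.
rewrite big_ord_recl coefXM /= mul0r add0r; apply: eq_bigr => k _.
by rewrite coefXM /= /bump /= add1n -natr1 mulrDl mul1r opprD addrA addrAC.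
Qed.

Lemma hmulXnp h n p f :
  hmul h ('X^n * p) f = (fun t => hmul h p f (t - n%:R * h)).
Proof.
elim: n => [|n IH].
  by rewrite expr0 mul1r; apply: boolp.funext => t; rewrite mul0r subr0.
rewrite exprS -mulrA hmulXp IH; apply: boolp.funext => t /=.
by congr (hmul h p f _); rewrite -natr1; ring.
Qed.

Lemma hmulfD h p f g : hmul h p (f + g) = hmul h p f + hmul h p g.
Proof.
apply: boolp.funext => t; transitivity (hmul h p f t + hmul h p g t) => //.
rewrite /hmul -big_split /=.
by apply: eq_bigr => k _; rewrite mulrDr.
Qed.

Lemma hmulf0 h p : hmul h p 0 = 0.
Proof. by apply: boolp.funext => t; rewrite /hmul big1 // => k _; rewrite mulr0. Qed.

Lemma hmul_sumf h p (I : Type) (r : seq I) (P : pred I) (G : I -> RR -> K) :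
  hmul h p (\sum_(i <- r | P i) G i) = \sum_(i <- r | P i) hmul h p (G i).
Proof. exact: (big_morph _ (hmulfD h p) (hmulf0 h p)). Qed.

Lemma hmul_sump h (I : Type) (r : seq I) (P : pred I) (G : I -> {poly K}) f :
  hmul h (\sum_(i <- r | P i) G i) f = \sum_(i <- r | P i) hmul h (G i) f.
Proof. exact: (big_morph (hmul h ^~ f) (fun p q => hmulDp h p q f) (hmul0p h f)). Qed.

Lemma hmulMp h p q f : hmul h (p * q) f = hmul h p (hmul h q f).
Proof.
elim/poly_ind: p => [|p a IH]; first by rewrite mul0r !hmul0p.
by rewrite (mulrC p) mulrDl -mulrA mul_polyC !hmulDp hmulZp hmulCp !hmulXp IH.
Qed.

Lemma hmul_comp_Xn h n p f : hmul h (p \Po 'X^n) f = hmul (n%:R * h) p f.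
Proof.
elim/poly_ind: p => [|p a IH]; first by rewrite comp_poly0 !hmul0p.
rewrite comp_poly_MXaddC !hmulDp !hmulCp (mulrC _ 'X^n) hmulXnp IH (mulrC p) hmulXp.
by [].
Qed.

Lemma hsubst_hmul c h p f : c != 0 ->
  hsubst c (hmul h p f) = hmul (c * h) p (hsubst c f).
Proof.
move=> c_nz; apply: boolp.funext => t; rewrite /hsubst /hmul.
by apply: eq_bigr => k _; congr (_ * f _); field.
Qed.

Lemma hsubstM c c' f : hsubst c (hsubst c' f) = hsubst (c * c') f.
Proof. by apply: boolp.funext => t; rewrite /hsubst invfM mulrA. Qed.

Lemma hsubst_sum c (I : Type) (r : seq I) (P : pred I) (G : I -> RR -> K) :
  hsubst c (\sum_(i <- r | P i) G i) = \sum_(i <- r | P i) hsubst c (G i).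
Proof. by apply: (big_morph (hsubst c)) => // f g; apply: boolp.funext. Qed.

Lemma hpolymulE p f : hpolymul p f = hmul 1 p f.
Proof.
apply: boolp.funext => t; rewrite /hpolymul /hmul.
by apply: eq_bigr => k _; rewrite mulr1.
Qed.

End HahnPolyAction.

Section MahlerRelation.
Variable K : fieldType.

Lemma mahler_relE (g : RR) e (Rs : nat -> {poly K}) f :
  mahler_rel g e Rs f <->
  \sum_(k < e.+1) hpolymul (Rs k) (hsubst (g ^+ k) f) = 0.
Proof.
split=> [rel|rel t]; first by apply: boolp.funext => t; rewrite fct_sumE /= rel.
by have := congr1 (@^~ t) rel; rewrite fct_sumE.
Qed.

(* Substituting x ↦ x^c with c = n h turns P_k(x) into (P_k ∘ X^n)(x^h). *)
Lemma mahler_rel_hsubst (g c h : RR) e (Rs : nat -> {poly K}) f (n : nat) :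
  mahler_rel g e Rs f -> c != 0 -> n%:R * h = c ->
  \sum_(k < e.+1) hmul h (Rs k \Po 'X^n) (hsubst (c * g ^+ k) f) = 0.
Proof.
move=> /mahler_relE rel c_nz nh_c.
transitivity (hsubst c (0 : RR -> K)); last exact: boolp.funext.
rewrite -[X in _ = hsubst c X]rel hsubst_sum; apply: eq_bigr => k _.
by rewrite hpolymulE hsubst_hmul // mulr1 hsubstM hmul_comp_Xn nh_c.
Qed.

End MahlerRelation.

Section Spans.
Variables (K : fieldType) (h : RR) (I : finType) (w : I -> RR -> K).
Implicit Types (p D : {poly K}) (v : RR -> K).

Definition polyspan v := exists c : I -> {poly K}, v = \sum_i hmul h (c i) (w i).

(* Membership in the K(x^h)-span of [w], stated without dividing Hahn series. *)
Definition fracspan v := exists2 D, D != 0 & polyspan (hmul h D v).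

Lemma polyspan0 : polyspan 0.
Proof. by exists (fun=> 0); rewrite big1 // => i _; rewrite hmul0p. Qed.

Lemma polyspanD v1 v2 : polyspan v1 -> polyspan v2 -> polyspan (v1 + v2).
Proof.
move=> [c1 ->] [c2 ->]; exists (fun i => c1 i + c2 i).
by rewrite -big_split /=; apply: eq_bigr => i _; rewrite hmulDp.
Qed.

Lemma polyspan_hmul p v : polyspan v -> polyspan (hmul h p v).
Proof.
move=> [c ->]; exists (fun i => p * c i).
by rewrite hmul_sumf; apply: eq_bigr => i _; rewrite hmulMp.
Qed.

Lemma fracspan_mem i : fracspan (w i).
Proof.
exists 1; first exact: oner_neq0.
exists (fun j => (j == i)%:R); rewrite hmul1p (bigD1 i) //= eqxx hmul1p.
by rewrite big1 ?addr0 // => j /negbTE ->; rewrite hmul0p.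
Qed.

Lemma fracspan0 : fracspan 0.
Proof. by exists 1; [exact: oner_neq0 | rewrite hmulf0; exact: polyspan0]. Qed.

Lemma fracspanD v1 v2 : fracspan v1 -> fracspan v2 -> fracspan (v1 + v2).
Proof.
move=> [D1 D1_nz s1] [D2 D2_nz s2]; exists (D1 * D2); first exact: mulf_neq0.
rewrite hmulfD {1}[D1 * D2]mulrC !hmulMp.
by apply: polyspanD; apply: polyspan_hmul.
Qed.

Lemma fracspan_hmul p v : fracspan v -> fracspan (hmul h p v).
Proof.
move=> [D D_nz s]; exists D => //.
by rewrite -hmulMp mulrC hmulMp; apply: polyspan_hmul.
Qed.

Lemma fracspanN v : fracspan v -> fracspan (- v).
Proof.
have -> : - v = hmul h (-1)%:P v.
  by rewrite hmulCp; apply: boolp.funext => t; rewrite mulN1r.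
exact: fracspan_hmul.
Qed.

Lemma fracspan_sum (J : Type) (r : seq J) (P : pred J) (G : J -> RR -> K) :
  (forall j, P j -> fracspan (G j)) -> fracspan (\sum_(j <- r | P j) G j).
Proof. exact: (big_ind fracspan fracspan0 fracspanD). Qed.

Lemma fracspan_hmulK D v : D != 0 -> fracspan (hmul h D v) -> fracspan v.
Proof.
move=> D_nz [E E_nz s]; exists (E * D); first exact: mulf_neq0.
by rewrite hmulMp.
Qed.

Lemma fracspan_pivot n (Q : nat -> {poly K}) (vs : nat -> RR -> K) k0 :
  (k0 <= n)%N -> \sum_(k < n.+1) hmul h (Q k) (vs k) = 0 -> Q k0 != 0 ->
  (forall k, (k <= n)%N -> k != k0 -> Q k != 0 -> fracspan (vs k)) ->
  fracspan (vs k0).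
Proof.
rewrite -ltnS => lt_k0 rel Qk0_nz span_others.
apply: (fracspan_hmulK Qk0_nz).
have -> : hmul h (Q k0) (vs k0) =
    - \sum_(k < n.+1 | k != Ordinal lt_k0) hmul h (Q k) (vs k).
  by apply/eqP; rewrite -addr_eq0; move: rel; rewrite (bigD1 (Ordinal lt_k0)) // => ->.
apply/fracspanN/fracspan_sum => k k_neq; have [->|Qk_nz] := eqVneq (Q k) 0.
  by rewrite hmul0p; exact: fracspan0.
by apply/fracspan_hmul/span_others => //; rewrite -ltnS ltn_ord.
Qed.

Lemma fracspan_dependent m (v : 'I_m -> RR -> K) : (#|I| < m)%N ->
  (forall j, fracspan (v j)) ->
  exists2 lam : 'I_m -> {poly K}, (exists j, lam j != 0) &
    \sum_j hmul h (lam j) (v j) = 0.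
Proof.
move=> ltIm /fin_all_exists2[D D_nz /fin_all_exists[c Dv_span]].
have [mu [j1 mu_nz] ker] :=
  idomain_rows_dependent (fun j k => c j (enum_val k)) ltIm.
exists (fun j => mu j * D j); first by exists j1; rewrite mulf_neq0.
under eq_bigr => j _ do rewrite hmulMp Dv_span hmul_sumf.
rewrite exchange_big big1 //= => i _.
under eq_bigr => j _ do rewrite -hmulMp.
by rewrite -hmul_sump; have := ker (enum_rank i); rewrite enum_rankK => ->; rewrite hmul0p.
Qed.

End Spans.

Section Propagation.
Variables (K : fieldType) (h : RR) (I : finType) (w : I -> RR -> K).
Variables (d M : nat) (P : nat -> {poly K}) (v : int -> RR -> K).
Hypothesis Pd_nz : P d != 0.
Hypothesis rel : forall s : int, `|s| <= M%:Z ->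
  exists2 n : nat, (0 < n)%N &
    \sum_(k < d.+1) hmul h (P k \Po 'X^n) (v (s + k%:Z)) = 0.

Local Notation span := (fracspan h w).

Lemma fracspan_rel_pivot (s : int) k0 :
  `|s| <= M%:Z -> (k0 <= d)%N -> P k0 != 0 ->
  (forall k, (k <= d)%N -> k != k0 -> P k != 0 -> span (v (s + k%:Z))) ->
  span (v (s + k0%:Z)).
Proof.
move=> /rel[n n_gt0 rel_s] le_k0d Pk0_nz span_others.
have comp_nz k : (P k \Po 'X^n != 0) = (P k != 0).
  by rewrite comp_poly_eq0 // size_polyXn ltnS.
apply: (fracspan_pivot (Q := fun k => P k \Po 'X^n) (vs := fun k => v (s + k%:Z))
         le_k0d rel_s); first by rewrite comp_nz.
by move=> k le_kd k_neq; rewrite comp_nz; exact: span_others.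
Qed.

(* The leading coefficient [P d] extends the window upwards, the lowest nonzero
   coefficient [P i0] extends it downwards. *)
Lemma fracspan_window : (forall i : nat, (i < d)%N -> span (v i%:Z)) ->
  forall n : nat, (n + d <= M)%N ->
  forall i : int, - n%:Z <= i < d%:Z + n%:Z -> span (v i).
Proof.
have P_nz : exists k, P k != 0 by exists d.
move=> base; have [i0 Pi0_nz i0_min] := ex_minnP P_nz.
have le_i0d : (i0 <= d)%N by apply: i0_min.
elim=> [|n IH] le_nM i /andP[lo hi].
  have -> : i = (absz i)%:Z by lia.
  by apply: base; lia.
case: (boolP (- n%:Z <= i < d%:Z + n%:Z)) => [|/negP out].
  by apply: IH; lia.
have [->|->] : i = n%:Z + d%:Z \/ i = (- n.+1%:Z - i0%:Z) + i0%:Z by lia.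
  apply: fracspan_rel_pivot => //; first lia.
  by move=> k le_kd k_neq _; apply: IH; lia.
apply: fracspan_rel_pivot => //; first lia.
by move=> k le_kd k_neq /i0_min le_i0k; apply: IH; lia.
Qed.

End Propagation.

Lemma fracspan_mahler_line (K : fieldType) (h : RR) (I : finType)
    (w : I -> RR -> K) (g c : RR) d (P : nat -> {poly K}) F M :
  g != 0 -> c != 0 -> P d != 0 -> mahler_rel g d P F ->
  (forall s : int, `|s| <= M%:Z -> exists n : nat, n%:R * h = c * g ^ s) ->
  (forall i : nat, (i < d)%N -> fracspan h w (hsubst (c * g ^ i%:Z) F)) ->
  forall i : int, (absz i + d < M)%N -> fracspan h w (hsubst (c * g ^ i) F).
Proof.
move=> g_nz c_nz Pd_nz relP expo base i le_iM.
apply: (fracspan_window (v := fun i => hsubst (c * g ^ i) F) Pd_nz _ base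
         (n := (absz i).+1) le_iM).
  move=> s /expo[n nh]; have cgs_nz : c * g ^ s != 0 by rewrite mulf_neq0 ?expfz_neq0.
  exists n; first by rewrite lt0n; apply: contraNneq cgs_nz => n0; rewrite -nh n0 mul0r.
  rewrite -[RHS](mahler_rel_hsubst relP cgs_nz nh); apply: eq_bigr => k _.
  by rewrite expfzDr // mulrA.
lia.
Qed.

Lemma is_mahler_hsubst_of_common_denominators (K : fieldType) (a b : RR)
    (F : RR -> K) d1 (P : nat -> {poly K}) d2 (Q : nat -> {poly K}) (N : nat) :
  a != 0 -> b != 0 ->
  P d1 != 0 -> mahler_rel a d1 P F -> Q d2 != 0 -> mahler_rel b d2 Q F ->
  (forall M : nat, exists2 L : nat, (0 < L)%N &
     forall s j : int, `|s| <= M%:Z -> `|j| <= M%:Z ->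
       L%:R * (a ^ s * b ^ j) \is a Num.nat) ->
  exists l : nat, (0 < l)%N /\
    forall m n : int, `|m| < N%:Z -> `|n| < N%:Z ->
      is_mahler (a ^ n * b ^ m) (hsubst l%:R F).
Proof.
move=> a_nz b_nz Pd1_nz relP Qd2_nz relQ common_den.
pose B := (N * (d1 * d2))%N; pose M := (B + d1 + d2).+1.
have [L L_gt0 denL] := common_den M.
have L_nz : (L%:R : RR) != 0 by rewrite pnatr_eq0 -lt0n.
pose h : RR := L%:R^-1.
have expo s j : `|s| <= M%:Z -> `|j| <= M%:Z ->
    exists n : nat, n%:R * h = a ^ s * b ^ j.
  move=> le_sM le_jM; have /natrP[n e] := denL s j le_sM le_jM.
  by exists n; rewrite -e mulrAC mulfV // mul1r.
pose u (i j : int) := hsubst (a ^ i * b ^ j) F.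
pose w (p : 'I_d1 * 'I_d2) := u p.1 p.2.
have rows (j : nat) : (j < d2)%N -> forall i : int, `|i| <= B%:Z -> fracspan h w (u i j).
  move=> lt_jd2 i le_iB; rewrite /u mulrC.
  apply: (fracspan_mahler_line (M := M) a_nz _ Pd1_nz relP); last lia.
  - by rewrite expfz_neq0.
  - by move=> s le_sM; rewrite mulrC; apply: expo => //; lia.
  - move=> i' lt_i'; rewrite mulrC.
    exact: (fracspan_mem h w (Ordinal lt_i', Ordinal lt_jd2)).
have grid (i j : int) : `|i| <= B%:Z -> `|j| <= B%:Z -> fracspan h w (u i j).
  move=> le_iB le_jB.
  apply: (fracspan_mahler_line (M := M) b_nz _ Qd2_nz relQ); last lia.
  - by rewrite expfz_neq0.
  - by move=> s le_sM; apply: expo => //; lia.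
  - by move=> j' lt_j'; exact: rows.
exists L; split => // m n le_mN le_nN.
pose gam := a ^ n * b ^ m.
have v_span (j : 'I_(d1 * d2).+1) : fracspan h w (hsubst (gam ^+ j) F).
  have -> : gam ^+ j = a ^ (n * j%:Z) * b ^ (m * j%:Z) by rewrite exprMn -!exprz_exp.
  have le_j := ltn_ord j.
  by apply: grid; nia.
have [|lam [j1 lam_nz] rel] := fracspan_dependent _ v_span.
  by rewrite card_prod !card_ord.
exists (d1 * d2)%N, (fun j => lam (inord j)).
split; first by exists j1; rewrite inord_val -ltnS ltn_ord.
apply/mahler_relE.
transitivity (hsubst L%:R (\sum_j hmul h (lam j) (hsubst (gam ^+ j) F))).
  rewrite hsubst_sum; apply: eq_bigr => j _.
  by rewrite inord_val hpolymulE hsubst_hmul // mulfV // !hsubstM mulrC.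
by rewrite rel; apply: boolp.funext.
Qed.

Lemma natr_mul_exprz_ratio (R : archiNumFieldType) (p q M : nat) (s : int) :
  (0 < p)%N -> (0 < q)%N -> `|s| <= M%:Z ->
  ((p * q) ^ M)%:R * (p%:R / q%:R : R) ^ s \is a Num.nat.
Proof.
move=> p_gt0 q_gt0 le_sM.
have [p_nz q_nz] : (p%:R : R) != 0 /\ (q%:R : R) != 0 by rewrite !pnatr_eq0 -!lt0n.
have -> : ((p * q) ^ M)%:R * (p%:R / q%:R : R) ^ s =
          p%:R ^ (M%:Z + s) * q%:R ^ (M%:Z - s).
  by rewrite natrX natrM exprMn expfzMl exprz_inv !expfzDr // !exprnP; ring.
have [-> ->] : M%:Z + s = (absz (M%:Z + s))%:Z /\ M%:Z - s = (absz (M%:Z - s))%:Z.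
  by lia.
by rewrite -!exprnP rpredM ?rpredX ?natr_nat.
Qed.

Lemma ratr_gt0E (R : numFieldType) (x : rat) : 0 < x ->
  ratr x = (absz (numq x))%:R / (absz (denq x))%:R :> R.
Proof. by move=> x_gt0; rewrite !natr_absz !gtr0_norm ?denq_gt0 ?numq_gt0. Qed.

Theorem mainTheorem12 (K : fieldExtType rat) (alpha beta : rat)
  (halpha : 0 < alpha) (hbeta : 0 < beta)
  (hindep : mult_indep (ratr alpha : RR) (ratr beta : RR))
  (F : RR -> K) (hF : is_hahn F)
  (d1 : nat) (P : nat -> {poly K}) (hP : P d1 != 0)
  (hPeq : mahler_rel (ratr alpha : RR) d1 P F)
  (d2 : nat) (Q : nat -> {poly K}) (hQ : Q d2 != 0)
  (hQeq : mahler_rel (ratr beta : RR) d2 Q F)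
  (N : nat) (hN : (0 < N)%N) :
  exists l : nat, (0 < l)%N /\
    forall m n : int, `|m| < N%:Z -> `|n| < N%:Z ->
      is_mahler ((ratr alpha : RR) ^ n * (ratr beta : RR) ^ m)
                (hsubst (l%:R : RR) F).
Proof.
have num_den_gt0 (x : rat) : 0 < x -> (0 < absz (numq x))%N /\ (0 < absz (denq x))%N.
  by move=> x_gt0; rewrite !absz_gt0 !gt_eqF ?numq_gt0 ?denq_gt0.
have [[p1_gt0 q1_gt0] [p2_gt0 q2_gt0]] := (num_den_gt0 _ halpha, num_den_gt0 _ hbeta).
apply: is_mahler_hsubst_of_common_denominators hP hPeq hQ hQeq _.
- by rewrite gt_eqF // ltr0q.
- by rewrite gt_eqF // ltr0q.
move=> M; exists ((`|numq alpha| * `|denq alpha|) ^ M * (`|numq beta| * `|denq beta|) ^ M)%N.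
  by rewrite muln_gt0 !expn_gt0 !muln_gt0 p1_gt0 q1_gt0 p2_gt0 q2_gt0.
move=> s j le_sM le_jM; rewrite !ratr_gt0E // natrM mulrACA.
by apply: rpredM; apply: natr_mul_exprz_ratio.
Qed.
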